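(* Let $\ell$ and $m$ be positive integers with $\ell\le m$, let $G$ be a torsion-free group written additively (not necessarily abelian), let $\mathbf{a}=(a_1,\dots,a_m)$ be a sequence of elements of $G$, and let $A$ be the set of distinct terms of $\mathbf{a}$. Then \[ |\Sigma^{\ell}(\mathbf{a})|\ \ge\ \sum_{a\in A}\mu_{\mathbf{a}}(a)-\ell+1 . \]
   Context: $\Sigma^{\ell}(\mathbf{a})$ is the set of all elements $a_{i_1}+\cdots+a_{i_\ell}$ with $i_1,\dots,i_\ell\in[1,m]$ pairwise distinct indices, taken in any order (the sums of $\ell$ terms of $\mathbf{a}$). For $a\in G$, $\rho_a(\mathbf{a})=|\{i\in[1,m]:a_i=a\}|$ and $\mu_{\mathbf{a}}(a)=\min(\ell,\rho_a(\mathbf{a}))$. *)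

From HB Require Import structures.
From mathcomp Require Import all_boot all_order all_algebra all_fingroup.
Set Implicit Arguments. Unset Strict Implicit. Unset Printing Implicit Defensive.

(* The group G is a (possibly infinite, possibly non-abelian) MathComp
   [groupType]; the paper's additive notation a + b is rendered as the
   group law a * b, 0 as 1, and n.a as a ^+ n. *)

Local Open Scope group_scope.

Definition torsion_free (G : groupType) : Prop :=
  forall (x : G) (n : nat), (0 < n)%N -> x ^+ n = 1 -> x = 1.

Definition Sigma (G : groupType) (m l : nat) (a : 'I_m -> G) : seq G :=
  undup [seq \prod_(i <- val t) a i
        | t <- enum [pred t : l.-tuple 'I_m | uniq t]].

Definition terms (G : groupType) (m : nat) (a : 'I_m -> G) : seq G :=
  undup [seq a i | i <- enum 'I_m].

Definition rho (G : groupType) (m : nat) (a : 'I_m -> G) (x : G) : nat :=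
  #|[pred i : 'I_m | a i == x]|.

Definition mu (G : groupType) (m l : nat) (a : 'I_m -> G) (x : G) : nat :=
  minn l (rho a x).

(* Kemperman's inequality |XB| >= |X| + |B| - 1 holds in a torsion-free group
   (Hamidoune's atom argument): let k be the least value of |YB| - |Y| over
   nonempty finite Y.  By submodularity of Y |-> |YB|, the sets attaining k are
   closed under translation and under nonempty intersection, so a smallest one,
   translated to contain 1, is closed under (x, y) |-> x^-1 y; in a torsion-free
   group such a finite set is {1}, whence k = |B| - 1.
   The theorem then follows by induction on l: pick a set T of indices carrying
   pairwise distinct terms, maximal subject to |T| <= |D| - l.  Then
   a(T) * Sigma^l(D \ T) is contained in Sigma^(l+1)(D), and removing T lowers
   sum_x min(l + 1, rho_x) to sum_x min(l, rho_x) at a cost of at most |T|. *)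

From HB Require Import structures.
From mathcomp Require Import all_boot all_order all_algebra all_fingroup.
From mathcomp Require Import finmap zify.
From Stdlib Require Import Classical_Prop Wf_nat.
Set Implicit Arguments. Unset Strict Implicit. Unset Printing Implicit Defensive.

Lemma ex_minimal (P : nat -> Prop) :
  (exists n, P n) -> exists2 n, P n & forall k, P k -> n <= k.
Proof.
move/(@dec_inh_nat_subset_has_unique_least_element P (fun n => classic (P n))).
by case=> n [[Pn n_min] _]; exists n => // k /n_min/leP.
Qed.

Section ProductSets.
Local Open Scope fset_scope.
Local Open Scope nat_scope.
Local Open Scope group_scope.
Variable G : groupType.
Implicit Types X Y Z B : {fset G}.

Definition fmul X Y : {fset G} := [fset x * y | x in X, y in Y].

Lemma fmulP X Y z :
  reflect (exists2 x, x \in X & exists2 y, y \in Y & z = x * y) (z \in fmul X Y).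
Proof. exact: imfset2P. Qed.

Lemma mem_fmul X Y x y : x \in X -> y \in Y -> x * y \in fmul X Y.
Proof. by move=> Xx Yy; apply/fmulP; exists x => //; exists y. Qed.

Lemma fmulS X X' Y Y' : X `<=` X' -> Y `<=` Y' -> fmul X Y `<=` fmul X' Y'.
Proof.
move=> /fsubsetP sXX' /fsubsetP sYY'; apply/fsubsetP => _ /fmulP [x Xx [y Yy ->]].
by apply: mem_fmul; [apply: sXX' | apply: sYY'].
Qed.

Lemma fmulA X Y Z : fmul X (fmul Y Z) = fmul (fmul X Y) Z.
Proof.
apply/fsetP => w; apply/fmulP/fmulP => [[x Xx [_ /fmulP [y Yy [z Zz ->]] ->]]|].
  by exists (x * y); [apply: mem_fmul | exists z; rewrite ?mulgA].
case=> _ /fmulP [x Xx [y Yy ->]] [z Zz ->].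
by exists x => //; exists (y * z); rewrite ?mulgA ?mem_fmul.
Qed.

Lemma card_fmul1l g X : #|` fmul [fset g] X| = #|` X|.
Proof.
have -> : fmul [fset g] X = [fset g * x | x in X].
  apply/fsetP => z; apply/fmulP/imfsetP => [[_ /fset1P -> [x Xx ->]]|[x Xx ->]].
    by exists x.
  by exists g; rewrite ?fset11 //; exists x.
by rewrite card_imfset //= => x y /mulgI.
Qed.

Lemma card_fmul1r X g : #|` fmul X [fset g]| = #|` X|.
Proof.
have -> : fmul X [fset g] = [fset x * g | x in X].
  apply/fsetP => z; apply/fmulP/imfsetP => [[x Xx [_ /fset1P -> ->]]|[x Xx ->]].
    by exists x.
  by exists x => //; exists g; rewrite ?fset11.
by rewrite card_imfset //= => x y /mulIg.
Qed.

Lemma leq_card_fmull X Y y : y \in Y -> #|` X| <= #|` fmul X Y|.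
Proof.
move=> Yy; rewrite -(card_fmul1r X y); apply/fsubset_leq_card/fmulS => //.
by rewrite fsub1set.
Qed.

Lemma card_fmulIU X Y B :
  #|` fmul (X `&` Y) B| + #|` fmul (X `|` Y) B| <= #|` fmul X B| + #|` fmul Y B|.
Proof.
rewrite -(cardfsUI (fmul X B) (fmul Y B)) addnC.
apply: leq_add; apply: fsubset_leq_card.
  apply/fsubsetP => z /fmulP [x]; rewrite in_fsetU => /orP [] Xx [y By ->].
    by rewrite in_fsetU mem_fmul.
  by rewrite in_fsetU orbC mem_fmul.
by rewrite fsubsetI !fmulS ?fsubsetIl ?fsubsetIr.
Qed.

End ProductSets.

Section TorsionFree.
Local Open Scope fset_scope.
Local Open Scope nat_scope.
Local Open Scope group_scope.
Variable G : groupType.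
Hypothesis tfG : torsion_free G.

Lemma expg_inj_torsion_free (g : G) : g != 1 -> injective (expgn g).
Proof.
move=> ng; suff le_inj i j : i <= j -> g ^+ i = g ^+ j -> i = j.
  move=> i j eqij; case: (leqP i j) => [le_ij|/ltnW le_ji]; first exact: le_inj.
  exact/esym/le_inj.
move=> le_ij; rewrite -(subnKC le_ij) expgnDr -{1}(mulg1 (g ^+ i)).
move=> /mulgI/esym gji1; case: (posnP (j - i)) => [|pos_ji]; first lia.
by move: ng; rewrite (tfG pos_ji gji1) eqxx.
Qed.

Lemma torsion_free_powers_fset (H : {fset G}) g :
  (forall n, g ^+ n \in H) -> g = 1.
Proof.
move=> powH; apply/eqP/negPn/negP => /expg_inj_torsion_free inj_g.
pose s := [seq g ^+ i | i <- iota 0 (#|` H|).+1].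
have : size s <= #|` H|.
  apply: uniq_leq_size => [|_ /mapP [i _ ->] //].
  by rewrite map_inj_uniq ?iota_uniq.
by rewrite size_map size_iota ltnn.
Qed.

Lemma torsion_free_divg_closed (H : {fset G}) :
  {in H &, forall x y, x^-1 * y \in H} -> H `<=` [fset 1].
Proof.
move=> divH; apply/fsubsetP => h Hh; rewrite in_fset1 -invg_eq1.
suff powH n : h^-1 ^+ n \in H by rewrite (torsion_free_powers_fset powH).
elim: n => [|n IHn]; first by rewrite expg0 -(mulVg h) divH.
by rewrite expgS divH.
Qed.

End TorsionFree.

Section Atoms.
Local Open Scope fset_scope.
Local Open Scope nat_scope.
Local Open Scope group_scope.
Variables (G : groupType) (B : {fset G}) (k : nat).
Hypothesis card_fmul_min :
  forall Y : {fset G}, Y != fset0 -> #|` Y| + k <= #|` fmul Y B|.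

Definition fragment (Y : {fset G}) := Y != fset0 /\ #|` fmul Y B| = #|` Y| + k.

Lemma fragmentI Y Z :
  fragment Y -> fragment Z -> Y `&` Z != fset0 -> fragment (Y `&` Z).
Proof.
move=> [Y0 cardYB] [_ cardZB] YZ0; split => //.
have YUZ0 : Y `|` Z != fset0.
  by rewrite -cardfs_gt0 (leq_trans _ (fsubset_leq_card (fsubsetUl Y Z))) ?cardfs_gt0.
have := card_fmulIU Y Z B; have := card_fmul_min YZ0; have := card_fmul_min YUZ0.
have := cardfsUI Y Z; lia.
Qed.

Lemma fragment_translate g Y : fragment Y -> fragment (fmul [fset g] Y).
Proof.
move=> [Y0 cardYB]; split; first by rewrite -cardfs_gt0 card_fmul1l cardfs_gt0.
by rewrite -fmulA !card_fmul1l.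
Qed.

Lemma minimal_fragment_divg_closed H :
  fragment H -> (forall Y, fragment Y -> #|` H| <= #|` Y|) -> 1 \in H ->
  {in H &, forall x y, x^-1 * y \in H}.
Proof.
move=> fragH minH H1 x y Hx Hy.
have xH_x : x \in fmul [fset x] H by rewrite -[x in x \in _]mulg1 mem_fmul ?fset11.
have fragI : fragment (H `&` fmul [fset x] H).
  apply: fragmentI (fragment_translate x fragH) _ => //.
  by apply/fset0Pn; exists x; rewrite in_fsetI Hx.
have /eqP eqI : H `&` fmul [fset x] H == H by rewrite eqEfcard fsubsetIl minH.
have : y \in H `&` fmul [fset x] H by rewrite eqI.
by rewrite in_fsetI => /andP [_ /fmulP [_ /fset1P -> [z Hz ->]]]; rewrite mulKg.
Qed.

Hypothesis tfG : torsion_free G.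

Lemma card_fragment_base : (exists Y, fragment Y) -> #|` B| = k.+1.
Proof.
move=> [Y fragY].
have [|_ [H0 [fragH0 <-]] minH0] :=
  @ex_minimal (fun n => exists Y, fragment Y /\ #|` Y| = n).
  by exists #|` Y|, Y.
have [h0 H0h0] : exists h0, h0 \in H0 by apply/fset0Pn; case: fragH0.
pose H := fmul [fset h0^-1] H0.
have fragH : fragment H := fragment_translate _ fragH0.
have H1 : 1 \in H by rewrite -(mulVg h0) mem_fmul ?fset11.
have minH Z : fragment Z -> #|` H| <= #|` Z|.
  by move=> fragZ; rewrite card_fmul1l; apply: minH0; exists Z.
have eqH : H = [fset 1].
  apply/eqP; rewrite eqEfsubset fsub1set H1 andbT.
  exact/torsion_free_divg_closed/minimal_fragment_divg_closed.
by case: fragH; rewrite eqH card_fmul1l cardfs1 add1n.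
Qed.

End Atoms.

Lemma kemperman_torsion_free (G : groupType) (X B : {fset G}) :
  torsion_free G -> X != fset0 -> B != fset0 ->
  #|` X| + #|` B| <= #|` fmul X B| + 1.
Proof.
move=> tfG X0 /fset0Pn [b Bb].
have [|k [Y [Y0 cardYB]] min_k] := @ex_minimal
    (fun k => exists Y : {fset G}, Y != fset0 /\ #|` fmul Y B| = #|` Y| + k).
  by exists (#|` fmul X B| - #|` X|), X; have := leq_card_fmull X Bb; split => //; lia.
have card_fmul_min Z : Z != fset0 -> #|` Z| + k <= #|` fmul Z B|.
  move=> Z0; have := leq_card_fmull Z Bb => le_Z_ZB.
  suff : k <= #|` fmul Z B| - #|` Z| by lia.
  by apply: min_k; exists Z; split => //; lia.
have := card_fragment_base card_fmul_min tfG (ex_intro _ Y (conj Y0 cardYB)).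
by have := card_fmul_min X X0; lia.
Qed.

Section DistinctProducts.
Local Open Scope fset_scope.
Local Open Scope nat_scope.
Local Open Scope group_scope.
Variables (G : groupType) (m : nat) (a : 'I_m -> G).
Implicit Types D T : {set 'I_m}.

(* [dprods l D] is Sigma^l of the subsequence of [a] indexed by [D]. *)
Fixpoint dprods l D : {fset G} :=
  if l is l'.+1 then \big[fsetU/fset0]_(i in D) fmul [fset a i] (dprods l' (D :\ i)%SET)
  else [fset 1].

Lemma dprodsSP l D y :
  reflect (exists2 i, i \in D & exists2 z, z \in dprods l (D :\ i)%SET & y = a i * z)
          (y \in dprods l.+1 D).
Proof.
apply: (iffP idP) => [/bigfcupP [i /andP [_ Di] /fmulP [_ /fset1P -> [z dz ->]]]|].
  by exists i => //; exists z.
case=> i Di [z dz ->]; apply/bigfcupP.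
by exists i; rewrite ?mem_index_enum ?mem_fmul ?fset11.
Qed.

Lemma dprods_subset l D D' : D \subset D' -> dprods l D `<=` dprods l D'.
Proof.
elim: l D D' => [|l IHl] D D' sDD' //; apply/fsubsetP => _ /dprodsSP [i Di [z dz ->]].
apply/dprodsSP; exists i; first exact: subsetP Di.
by exists z => //; apply: fsubsetP (IHl _ _ (setSD _ sDD')) _ dz.
Qed.

Lemma dprods_neq0 l D : l <= #|D| -> dprods l D != fset0.
Proof.
elim: l D => [|l IHl] D le_lD; first by apply/fset0Pn; exists 1; rewrite fset11.
have [i Di] : exists i, i \in D by apply/card_gt0P; lia.
have /fset0Pn [z dz] : dprods l (D :\ i)%SET != fset0.
  by apply: IHl; rewrite (cardsD1 i D) Di in le_lD.
by apply/fset0Pn; exists (a i * z); apply/dprodsSP; exists i => //; exists z.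
Qed.

Lemma dprods_tuple l D y : y \in dprods l D ->
  exists t : l.-tuple 'I_m, [/\ uniq t, {subset t <= D} & y = \prod_(i <- t) a i].
Proof.
elim: l D y => [|l IHl] D y.
  by move=> /fset1P ->; exists [tuple]; rewrite big_nil.
case/dprodsSP=> i Di [z /IHl [t [uniq_t sub_t ->]] ->].
exists [tuple of i :: t]; split; last by rewrite big_cons.
- by rewrite /= uniq_t andbT; apply/negP => /sub_t; rewrite !inE eqxx.
- by move=> j; rewrite inE => /predU1P [-> //|/sub_t]; rewrite !inE => /andP [].
Qed.

Lemma dprods_sub_Sigma l : {subset dprods l [set: 'I_m] <= Sigma l a}.
Proof.
move=> y /dprods_tuple [t [uniq_t _ ->]]; rewrite mem_undup.
by apply/mapP; exists t; rewrite ?mem_enum.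
Qed.

Lemma fmul_image_dprods l D T : T \subset D ->
  fmul [fset a i | i in T] (dprods l (D :\: T)) `<=` dprods l.+1 D.
Proof.
move=> sTD; apply/fsubsetP => _ /fmulP [_ /imfsetP [i /= Ti ->] [z dz ->]].
apply/dprodsSP; exists i; first exact: subsetP Ti.
exists z => //; apply: fsubsetP (dprods_subset l _) _ dz.
by apply/subsetP => j; rewrite !inE => /andP [Tj ->]; case: eqP Tj => // ->; rewrite Ti.
Qed.

End DistinctProducts.

Section Multiplicities.
Variables (G : groupType) (m : nat) (a : 'I_m -> G).
Implicit Types D T : {set 'I_m}.

Definition rho_on D x := #|[set i in D | a i == x]|.

Definition mu_sum l D := \sum_(x <- terms a) minn l (rho_on D x).

Lemma rho_on_gt0P D x : reflect (exists2 i, i \in D & a i = x) (0 < rho_on D x).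
Proof.
apply: (iffP card_gt0P) => [[i]|[i Di aix]]; last by exists i; rewrite inE Di aix eqxx.
by rewrite inE => /andP [Di /eqP aix]; exists i.
Qed.

Lemma rho_on_card D x : rho_on D x <= #|D|.
Proof. by apply/subset_leq_card/subsetP => i; rewrite inE => /andP []. Qed.

Lemma rho_on_le1 T x : {in T &, injective a} -> rho_on T x <= 1.
Proof.
move=> injT; apply/card_le1_eqP => i j; rewrite !inE.
move=> /andP [Ti /eqP aix] /andP [Tj /eqP ajx].
by apply: injT; rewrite ?aix ?ajx.
Qed.

Lemma rho_onD D T x : T \subset D -> rho_on D x = rho_on (D :\: T) x + rho_on T x.
Proof.
move=> sTD; rewrite /rho_on -(cardsID T [set i in D | a i == x]) addnC.
congr (_ + _); apply: eq_card => i; rewrite !inE.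
  by rewrite andbA.
by case Ti: (i \in T); rewrite ?andbT ?andbF // (subsetP sTD i Ti).
Qed.

Lemma sum_rho_on T : \sum_(x <- terms a) rho_on T x = #|T|.
Proof.
have rhoE x : rho_on T x = \sum_(i in T) (a i == x).
  rewrite /rho_on -sum1_card big_mkcond [RHS]big_mkcond; apply: eq_bigr => i _.
  by rewrite inE; case: (i \in T); case: (a i == x).
under eq_bigr do rewrite rhoE; rewrite exchange_big -sum1_card; apply: eq_bigr => i _.
have terms_ai : a i \in terms a by rewrite mem_undup map_f ?mem_enum.
have count_ai : count_mem (a i) (terms a) = 1.
  by rewrite count_uniq_mem ?terms_ai // undup_uniq.
rewrite -count_ai -sum1_count [RHS]big_mkcond /=.
by apply: eq_bigr => x _; rewrite eq_sym; case: (x == a i).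
Qed.

Lemma mu_sum_step l D T :
  T \subset D -> (forall x, rho_on T x <= 1) ->
  (forall x, rho_on T x = 0 -> rho_on (D :\: T) x <= l) ->
  mu_sum l.+1 D <= mu_sum l (D :\: T) + #|T|.
Proof.
move=> sTD le1 cover; rewrite -sum_rho_on -big_split; apply: leq_sum => x _ /=.
by rewrite (rho_onD x sTD); have := le1 x; have := cover x; lia.
Qed.

Lemma exists_step_set l D : l < #|D| ->
  exists T, [/\ T \subset D, 0 < #|T|, #|T| <= #|D| - l, {in T &, injective a}
              & forall x, rho_on T x = 0 -> rho_on (D :\: T) x <= l].
Proof.
move=> lt_lD; pose ok T := [&& T \subset D, dinjectiveb a T & #|T| <= #|D| - l].
have ok0 : ok set0 by rewrite /ok sub0set cards0 /dinjectiveb enum_set0.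
case: (arg_maxnP (fun T => #|T|) ok0) => T /and3P [sTD /dinjectiveP injT leT] maxT.
exists T; split => //.
  have [i Di] : exists i, i \in D by apply/card_gt0P; lia.
  rewrite -(cards1 i); apply: maxT; apply/and3P.
  split; rewrite ?sub1set ?cards1 //; last by lia.
  by apply/dinjectiveP => u v /set1P -> /set1P ->.
move=> x /eqP; rewrite -leqn0 leqNgt => /rho_on_gt0P x_notin_aT.
have [ltT|geT] := ltnP #|T| (#|D| - l); last first.
  by rewrite (leq_trans (rho_on_card _ _)) // cardsD (setIidPr sTD); lia.
suff /eqP : rho_on (D :\: T) x == 0 by move=> ->.
rewrite -leqn0 leqNgt; apply/rho_on_gt0P => -[j]; rewrite inE => /andP [Tj Dj] ajx.
suff : #|j |: T| <= #|T| by rewrite cardsU1 Tj add1n ltnn.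
apply: maxT; apply/and3P; split; rewrite ?subUset ?sub1set ?Dj ?cardsU1 ?Tj //.
apply/dinjectiveP => u v; rewrite !inE => /predU1P [->|Tu] /predU1P [->|Tv] // auv.
- by case: x_notin_aT; exists v; rewrite -?auv.
- by case: x_notin_aT; exists u; rewrite ?auv.
- exact: injT.
Qed.

End Multiplicities.

Lemma mu_sum_le_card_dprods (G : groupType) (m : nat) (a : 'I_m -> G) l
    (D : {set 'I_m}) :
  torsion_free G -> l <= #|D| -> mu_sum a l D + 1 <= #|` dprods a l D| + l.
Proof.
move=> tfG; elim: l D => [|l IHl] D le_lD.
  by rewrite /mu_sum big1 ?cardfs1 // => x _; rewrite min0n.
have [T [sTD T0 leT injT coverT]] := exists_step_set a le_lD.
have cardDT : #|D :\: T| = #|D| - #|T| by rewrite cardsD (setIidPr sTD).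
have card_aT : #|` [fset a i | i in T]%fset| = #|T|.
  by rewrite card_in_imfset // -card_finset card_in_imfset.
have aT0 : [fset a i | i in T]%fset != fset0 by rewrite -cardfs_gt0 card_aT.
have le_l_DT : l <= #|D :\: T| by lia.
have := kemperman_torsion_free tfG aT0 (dprods_neq0 a le_l_DT).
have := fsubset_leq_card (fmul_image_dprods a l sTD).
have := mu_sum_step sTD (fun x => rho_on_le1 x injT) coverT.
by have := IHl _ le_l_DT; lia.
Qed.

Local Open Scope ring_scope.

Theorem theorem6p1 (G : groupType) (l m : nat) (a : 'I_m -> G) :
  (0 < l)%N -> (l <= m)%N -> torsion_free G ->
  ((\sum_(x <- terms a) mu l a x)%N)%:Z - l%:Z + 1
    <= (size (Sigma l a))%:Z.
Proof.
(* The bound also holds for l = 0. *)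
move=> _ le_lm tfG.
have le_l_I : (l <= #|[set: 'I_m]|)%N by rewrite cardsT card_ord.
have := mu_sum_le_card_dprods a tfG le_l_I.
have -> : mu_sum a l [set: 'I_m] = (\sum_(x <- terms a) mu l a x)%N.
  by apply: eq_bigr => x _; congr minn; apply: eq_card => i; rewrite !inE.
have : (#|` dprods a l [set: 'I_m]| <= size (Sigma l a))%N.
  by apply: uniq_leq_size; [exact: fset_uniq | exact: dprods_sub_Sigma].
lia.
Qed.
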